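(* Assume $\theta_i<1$ for all $i$ and $\theta_j>0$ for some $j$, and let $\zeta=n\theta_{\mathrm{ave}}-\theta_{\min}$. If $\theta_{\max}<\dfrac{n}{n+2(1+\zeta)}$, then for every $x(0)\in\Delta_n$ the trajectory of system (A) converges exponentially fast to the unique fixed point $x^*$ of $F$ in $\Delta_n$.
   Context: Let $n\ge 2$, $\mathbf 1_n$ the all-ones vector, $I_n$ the identity matrix, $\Delta_n=\{x\in\mathbb R^n: x\ge 0,\ \mathbf 1_n^Tx=1\}$. Let $C\in\mathbb R^{n\times n}$ be a nonnegative row-stochastic matrix with zero diagonal, $\theta=(\theta_1,\dots,\theta_n)\in[0,1]^n$, $\Theta=\mathrm{diag}(\theta)$, and for $x\in\mathbb R^n$, $W(x)=\mathrm{diag}(x)+(I_n-\mathrm{diag}(x))C$. Let $\theta_{\min}=\min_j\theta_j$, $\theta_{\mathrm{ave}}=\frac1n\sum_j\theta_j$, $\theta_{\max}=\max_j\theta_j$. System (A): $x(s+1)=F(x(s))$, $s=0,1,2,\dots$, $x(0)\in\Delta_n$, where $F(x)=(I_n-\Theta)(I_n-W(x)^T\Theta)^{-1}\mathbf 1_n/n$. *)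

(* classical reals. Vectors in R^n are functions nat -> R read
   on indices 0..n-1; n x n matrices are functions nat -> nat -> R. *)
From Stdlib Require Import Reals Lra Lia Arith ClassicalEpsilon.
Open Scope R_scope.

Fixpoint fsum (n : nat) (f : nat -> R) : R :=
  match n with O => 0 | S k => fsum k f + f k end.

(* max / min over indices 0..n-1 (for n >= 1) *)
Fixpoint fmax (n : nat) (f : nat -> R) : R :=
  match n with O => f O | S k => Rmax (fmax k f) (f k) end.
Fixpoint fmin (n : nat) (f : nat -> R) : R :=
  match n with O => f O | S k => Rmin (fmin k f) (f k) end.

Definition theta_min (n : nat) (theta : nat -> R) : R := fmin n theta.
Definition theta_max (n : nat) (theta : nat -> R) : R := fmax n theta.
Definition theta_ave (n : nat) (theta : nat -> R) : R := fsum n theta / INR n.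

Definition in_simplex (n : nat) (x : nat -> R) : Prop :=
  (forall i, (i < n)%nat -> 0 <= x i) /\ fsum n x = 1.

(* W(x) = diag(x) + (I - diag(x)) C *)
Definition Wmat (C : nat -> nat -> R) (x : nat -> R) : nat -> nat -> R :=
  fun i j => (if Nat.eqb i j then x i else 0) + (1 - x i) * C i j.

(* I - W(x)^T Theta *)
Definition Mmat (C : nat -> nat -> R) (theta : nat -> R) (x : nat -> R)
  : nat -> nat -> R :=
  fun i j => (if Nat.eqb i j then 1 else 0) - Wmat C x j i * theta j.

(* M^{-1} b : the solution z of M z = b (well defined when M is invertible,
   which is the case for x in the simplex and theta_i < 1). *)
Definition solve (n : nat) (M : nat -> nat -> R) (b : nat -> R) : nat -> R :=
  epsilon (inhabits (fun _ : nat => 0))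
    (fun z => forall i, (i < n)%nat -> fsum n (fun j => M i j * z j) = b i).

(* F(x) = (I - Theta) (I - W(x)^T Theta)^{-1} 1_n / n *)
Definition Fmap (n : nat) (C : nat -> nat -> R) (theta : nat -> R)
  (x : nat -> R) : nat -> R :=
  fun i => (1 - theta i) * solve n (Mmat C theta x) (fun _ => 1 / INR n) i.

Fixpoint traj (n : nat) (C : nat -> nat -> R) (theta : nat -> R)
  (x0 : nat -> R) (s : nat) : nat -> R :=
  match s with
  | O => x0
  | S k => Fmap n C theta (traj n C theta x0 k)
  end.

Definition is_fixed (n : nat) (C : nat -> nat -> R) (theta : nat -> R)
  (x : nat -> R) : Prop :=
  forall i, (i < n)%nat -> Fmap n C theta x i = x i.

(* Write A(x) = W(x)^T Theta, i.e. A(x)_ij = W(x)_ji theta_j.  Then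
   F(x) = (1 - Theta) z(x), where z(x) is the solution of z = 1/n + A(x) z.
   The columns of A(x) sum to theta_j <= theta_max < 1, so z |-> 1/n + A(x) z
   is an l1-contraction: z(x) exists, is nonnegative, and F maps the simplex
   into itself.  Dually, the solution g of g = e_i + A(x)^T g (a sup-norm
   contraction) satisfies n z_i = sum_k g_k, and a maximum principle for g
   gives n (1 - theta_i) z_i <= 1 + sum theta - theta_i <= 1 + zeta.
   Comparing the linear systems for z(x) and z(y) shows that F is an
   l1-contraction of the simplex with factor
   q = 2 theta_max (1 + zeta) / (n (1 - theta_max)), and q < 1 is exactly the
   hypothesis of the theorem; the Banach fixed-point theorem concludes. *)

From Stdlib Require Import Reals Lra Lia Arith ClassicalEpsilon
  FunctionalExtensionality.
Open Scope R_scope.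

(** * Finite sums and maxima *)

Lemma fsum_ext n f g :
  (forall i, (i < n)%nat -> f i = g i) -> fsum n f = fsum n g.
Proof.
  induction n as [|n IH]; intros H; simpl; [reflexivity|].
  rewrite IH by (intros i Hi; apply H; lia). rewrite (H n) by lia. reflexivity.
Qed.

Lemma fsum_plus n f g : fsum n (fun i => f i + g i) = fsum n f + fsum n g.
Proof. induction n as [|n IH]; simpl; [lra|]. rewrite IH; lra. Qed.

Lemma fsum_minus n f g : fsum n (fun i => f i - g i) = fsum n f - fsum n g.
Proof. induction n as [|n IH]; simpl; [lra|]. rewrite IH; lra. Qed.

Lemma fsum_scal n c f : fsum n (fun i => c * f i) = c * fsum n f.
Proof. induction n as [|n IH]; simpl; [lra|]. rewrite IH; lra. Qed.

Lemma fsum_const n c : fsum n (fun _ => c) = INR n * c.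
Proof. induction n as [|n IH]; simpl fsum; [simpl; lra|]. rewrite IH, S_INR; lra. Qed.

Lemma fsum_le n f g :
  (forall i, (i < n)%nat -> f i <= g i) -> fsum n f <= fsum n g.
Proof.
  induction n as [|n IH]; intros H; simpl; [lra|].
  apply Rplus_le_compat; [apply IH; intros i Hi|]; apply H; lia.
Qed.

Lemma fsum_nonneg n f : (forall i, (i < n)%nat -> 0 <= f i) -> 0 <= fsum n f.
Proof. intros H. rewrite <- (Rmult_0_r (INR n)), <- fsum_const. now apply fsum_le. Qed.

Lemma fsum_abs n f : Rabs (fsum n f) <= fsum n (fun i => Rabs (f i)).
Proof.
  induction n as [|n IH]; simpl; [rewrite Rabs_R0; lra|].
  eapply Rle_trans; [apply Rabs_triang|lra].
Qed.

Lemma fsum_swap n m (f : nat -> nat -> R) :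
  fsum n (fun i => fsum m (fun j => f i j)) = fsum m (fun j => fsum n (fun i => f i j)).
Proof.
  induction n as [|n IH]; simpl; [rewrite fsum_const; simpl; lra|].
  rewrite IH, <- fsum_plus. reflexivity.
Qed.

Lemma fsum_delta n i (a : nat -> R) : (i < n)%nat ->
  fsum n (fun j => if Nat.eqb i j then a j else 0) = a i.
Proof.
  induction n as [|n IH]; intros Hi; simpl; [lia|].
  destruct (Nat.eqb_spec i n) as [->|Hne].
  - rewrite (fsum_ext n _ (fun _ => 0)), fsum_const; [lra|].
    intros j Hj. destruct (Nat.eqb_spec n j); [lia|reflexivity].
  - rewrite IH by lia. lra.
Qed.

Lemma fsum_term_le n f i :
  (forall j, (j < n)%nat -> 0 <= f j) -> (i < n)%nat -> f i <= fsum n f.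
Proof.
  induction n as [|n IH]; intros H Hi; simpl; [lia|].
  assert (0 <= f n) by (apply H; lia).
  destruct (Nat.eq_dec i n) as [->|Hne].
  - assert (0 <= fsum n f) by (apply fsum_nonneg; intros; apply H; lia). lra.
  - assert (f i <= fsum n f) by (apply IH; [intros; apply H|]; lia). lra.
Qed.

Lemma fmax_ge n f i : (i < n)%nat -> f i <= fmax n f.
Proof.
  induction n as [|n IH]; intros Hi; simpl; [lia|].
  destruct (Nat.eq_dec i n) as [->|Hne]; [apply Rmax_r|].
  eapply Rle_trans; [apply IH; lia|apply Rmax_l].
Qed.

Lemma fmax_le n f B :
  (0 < n)%nat -> (forall i, (i < n)%nat -> f i <= B) -> fmax n f <= B.
Proof.
  induction n as [|[|n] IH]; intros Hn H; simpl; [lia| |].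
  - apply Rmax_lub; apply H; lia.
  - apply Rmax_lub; [apply IH; [lia|intros; apply H; lia]|apply H; lia].
Qed.

Lemma fmax_lt n f B :
  (0 < n)%nat -> (forall i, (i < n)%nat -> f i < B) -> fmax n f < B.
Proof.
  induction n as [|[|n] IH]; intros Hn H; simpl; [lia| |].
  - apply Rmax_lub_lt; apply H; lia.
  - apply Rmax_lub_lt; [apply IH; [lia|intros; apply H; lia]|apply H; lia].
Qed.

Lemma fmin_le n f i : (i < n)%nat -> fmin n f <= f i.
Proof.
  induction n as [|n IH]; intros Hi; simpl; [lia|].
  destruct (Nat.eq_dec i n) as [->|Hne]; [apply Rmin_r|].
  eapply Rle_trans; [apply Rmin_l|apply IH; lia].
Qed.

(** * Norms on R^n and matrix-vector estimates *)

Definition l1norm (n : nat) (u : nat -> R) : R := fsum n (fun i => Rabs (u i)).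
Definition supnorm (n : nat) (u : nat -> R) : R := fmax n (fun i => Rabs (u i)).

(* A norm squeezed between the sup-norm and the l1-norm: all that the
   Banach theorem below needs from the metric. *)
Definition norm_bounds (n : nat) (N : (nat -> R) -> R) : Prop :=
  (forall u i, (i < n)%nat -> Rabs (u i) <= N u) /\
  (forall u, N u <= l1norm n u).

Lemma l1norm_bounds n : norm_bounds n (l1norm n).
Proof.
  split; [|intros; lra].
  intros u i Hi. apply (fsum_term_le n (fun i => Rabs (u i))); auto.
  intros; apply Rabs_pos.
Qed.

Lemma supnorm_bounds n : (0 < n)%nat -> norm_bounds n (supnorm n).
Proof.
  intros Hn. split.
  - intros u i Hi. apply (fmax_ge n (fun i => Rabs (u i))); auto.
  - intros u. apply fmax_le; auto. intros i Hi.
    apply (fsum_term_le n (fun i => Rabs (u i))); auto. intros; apply Rabs_pos.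
Qed.

Lemma norm_bounds_nonneg n N u : (0 < n)%nat -> norm_bounds n N -> 0 <= N u.
Proof. intros Hn [HN _]. eapply Rle_trans; [apply Rabs_pos|apply (HN u 0%nat Hn)]. Qed.

Definition matvec (n : nat) (B : nat -> nat -> R) (u : nat -> R) : nat -> R :=
  fun i => fsum n (fun j => B i j * u j).

Lemma matvec_minus n B u v :
  (fun i => matvec n B u i - matvec n B v i) = matvec n B (fun j => u j - v j).
Proof.
  apply functional_extensionality. intros i. unfold matvec.
  rewrite <- fsum_minus. apply fsum_ext. intros; ring.
Qed.

Lemma fsum_matvec n B u :
  fsum n (matvec n B u) = fsum n (fun j => fsum n (fun i => B i j) * u j).
Proof.
  unfold matvec. rewrite fsum_swap. apply fsum_ext. intros j Hj.
  rewrite <- (Rmult_comm (u j)), <- fsum_scal. apply fsum_ext; intros; ring.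
Qed.

Lemma l1norm_matvec n B u :
  l1norm n (matvec n B u) <= fsum n (fun j => fsum n (fun i => Rabs (B i j)) * Rabs (u j)).
Proof.
  unfold l1norm. eapply Rle_trans.
  - apply fsum_le. intros i Hi. apply fsum_abs.
  - rewrite <- (fsum_matvec n (fun i j => Rabs (B i j)) (fun j => Rabs (u j))).
    apply Req_le, fsum_ext. intros i Hi. apply fsum_ext. intros j Hj.
    apply Rabs_mult.
Qed.

Lemma abs_matvec_le n B u k :
  Rabs (matvec n B u k) <= fsum n (fun j => Rabs (B k j)) * supnorm n u.
Proof.
  unfold matvec. eapply Rle_trans; [apply fsum_abs|].
  rewrite Rmult_comm, <- fsum_scal. apply fsum_le. intros j Hj.
  rewrite Rabs_mult, (Rmult_comm (supnorm n u)).
  apply Rmult_le_compat_l; [apply Rabs_pos|].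
  apply (fmax_ge n (fun j => Rabs (u j))); auto.
Qed.

(** * Limits and the Banach fixed-point theorem on R^n *)

Lemma Rabs_le_0 r : Rabs r <= 0 -> r = 0.
Proof.
  intros H. destruct (Req_dec r 0) as [|Hr]; [assumption|].
  pose proof (Rabs_pos_lt r Hr). lra.
Qed.

Lemma limit_abs_le (u : nat -> R) l a e s0 :
  Un_cv u l -> (forall k, (s0 <= k)%nat -> Rabs (u k - a) <= e) -> Rabs (l - a) <= e.
Proof.
  intros Hcv Hb. destruct (Rle_lt_dec (Rabs (l - a)) e) as [|Hgt]; [assumption|].
  destruct (Hcv (Rabs (l - a) - e)) as [M HM]; [lra|].
  specialize (HM (Nat.max M s0) ltac:(lia)). specialize (Hb (Nat.max M s0) ltac:(lia)).
  unfold R_dist in HM. rewrite <- Rabs_Ropp, Ropp_minus_distr in HM.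
  assert (Htri : Rabs (l - a) <= Rabs (l - u (Nat.max M s0)) + Rabs (u (Nat.max M s0) - a))
    by (replace (l - a) with ((l - u (Nat.max M s0)) + (u (Nat.max M s0) - a)) by ring;
        apply Rabs_triang).
  lra.
Qed.

Lemma limit_nonneg (u : nat -> R) l : (forall s, 0 <= u s) -> Un_cv u l -> 0 <= l.
Proof.
  intros H Hcv. destruct (Rle_lt_dec 0 l) as [|Hl]; [assumption|].
  destruct (Hcv (- l)) as [M HM]; [lra|]. specialize (HM M (le_n M)).
  specialize (H M). unfold R_dist, Rabs in HM. destruct Rcase_abs in HM; lra.
Qed.

Lemma fsum_cv n (u : nat -> nat -> R) L :
  (forall i, (i < n)%nat -> Un_cv (fun s => u s i) (L i)) ->
  Un_cv (fun s => fsum n (u s)) (fsum n L).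
Proof.
  induction n as [|n IH]; simpl; intros H.
  - intros e He. exists O. intros. unfold R_dist. rewrite Rminus_0_r, Rabs_R0. lra.
  - apply CV_plus; [apply IH; intros; apply H|apply H]; lia.
Qed.

Lemma geometric_squeeze a c q :
  0 <= q < 1 -> (forall s, a <= c * q ^ s) -> a <= 0.
Proof.
  intros Hq H. destruct (Rle_lt_dec a 0) as [|Ha]; [assumption|].
  destruct (pow_lt_1_zero q ltac:(rewrite Rabs_right; lra) (a / (Rabs c + 1)))
    as [M HM]; [apply Rdiv_lt_0_compat; [lra|pose proof (Rabs_pos c); lra]|].
  specialize (HM M (le_n M)). specialize (H M).
  rewrite Rabs_right in HM by (apply Rle_ge, pow_le; lra).
  assert (Hpow : 0 <= q ^ M) by (apply pow_le; lra).
  assert (Hc : c * q ^ M <= Rabs c * q ^ M) by (apply Rmult_le_compat_r; [lra|apply Rle_abs]).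
  apply (Rmult_lt_compat_l (Rabs c + 1)) in HM; [|pose proof (Rabs_pos c); lra].
  replace ((Rabs c + 1) * (a / (Rabs c + 1))) with a in HM
    by (field; pose proof (Rabs_pos c); lra).
  nra.
Qed.

Lemma geometric_tail (u : nat -> R) D q :
  0 <= q < 1 -> (forall t, Rabs (u (S t) - u t) <= D * q ^ t) ->
  forall s k, (s <= k)%nat -> Rabs (u k - u s) <= D / (1 - q) * q ^ s.
Proof.
  intros Hq Hstep. set (K := D / (1 - q)).
  assert (Hsum : forall s k, Rabs (u (s + k)%nat - u s) <= K * (q ^ s - q ^ (s + k))).
  { intros s k. induction k as [|k IH].
    - rewrite Nat.add_0_r, !Rminus_diag, Rabs_R0. lra.
    - replace (u (s + S k)%nat - u s)
        with ((u (S (s + k)) - u (s + k)%nat) + (u (s + k)%nat - u s))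
        by (rewrite <- plus_n_Sm; ring).
      eapply Rle_trans; [apply Rabs_triang|].
      pose proof (Hstep (s + k)%nat) as Hs. rewrite <- plus_n_Sm. simpl pow.
      replace (K * (q ^ s - q * q ^ (s + k))) with (K * (q ^ s - q ^ (s + k)) + D * q ^ (s + k))
        by (unfold K; field; lra). lra. }
  assert (HD : 0 <= D) by (specialize (Hstep O); simpl in Hstep;
                           pose proof (Rabs_pos (u 1%nat - u 0%nat)); lra).
  assert (HK : 0 <= K) by (apply Rmult_le_pos; [lra|left; apply Rinv_0_lt_compat; lra]).
  intros s k Hsk. replace k with (s + (k - s))%nat by lia.
  eapply Rle_trans; [apply Hsum|]. pose proof (pow_le q (s + (k - s)) ltac:(lra)). nra.
Qed.

Lemma geometric_cv (u : nat -> R) D q :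
  0 <= q < 1 -> (forall t, Rabs (u (S t) - u t) <= D * q ^ t) ->
  exists l, Un_cv u l /\ forall s, Rabs (u s - l) <= D / (1 - q) * q ^ s.
Proof.
  intros Hq Hstep. pose proof (geometric_tail u D q Hq Hstep) as Htail.
  set (K := D / (1 - q)) in Htail |- *.
  assert (HK : 0 <= K) by (pose proof (Htail O O (le_n O)); pose proof (Rabs_pos (u O - u O));
                           simpl in *; lra).
  assert (Hcauchy : Cauchy_crit u).
  { intros e He.
    destruct (pow_lt_1_zero q ltac:(rewrite Rabs_right; lra) (e / (K + 1)))
      as [M HM]; [apply Rdiv_lt_0_compat; lra|].
    assert (Hsmall : forall s, (s >= M)%nat -> K * q ^ s < e).
    { intros s Hs. specialize (HM s Hs).
      rewrite Rabs_right in HM by (apply Rle_ge, pow_le; lra).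
      apply (Rmult_lt_compat_l (K + 1)) in HM; [|lra].
      replace ((K + 1) * (e / (K + 1))) with e in HM by (field; lra).
      pose proof (pow_le q s ltac:(lra)). nra. }
    exists M. intros a b Ha Hb. unfold R_dist. destruct (le_lt_dec a b).
    - rewrite <- Rabs_Ropp, Ropp_minus_distr.
      eapply Rle_lt_trans; [apply Htail; lia|apply Hsmall; lia].
    - eapply Rle_lt_trans; [apply Htail; lia|apply Hsmall; lia]. }
  destruct (R_complete u Hcauchy) as [l Hl]. exists l. split; [assumption|].
  intros s. rewrite <- Rabs_Ropp, Ropp_minus_distr. apply (limit_abs_le u l (u s) _ s Hl).
  intros k Hk. apply Htail. lia.
Qed.

Section Banach.

Variables (n : nat) (N : (nat -> R) -> R) (P : (nat -> R) -> Prop)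
  (T : (nat -> R) -> nat -> R) (q : R).
Hypothesis n_pos : (0 < n)%nat.
Hypothesis N_bounds : norm_bounds n N.
Hypothesis q_range : 0 <= q < 1.
Hypothesis T_invariant : forall u, P u -> P (T u).
Hypothesis T_contraction : forall u v, P u -> P v ->
  N (fun i => T u i - T v i) <= q * N (fun i => u i - v i).
Hypothesis P_closed : forall (u : nat -> nat -> R) L, (forall s, P (u s)) ->
  (forall i, (i < n)%nat -> Un_cv (fun s => u s i) (L i)) -> P L.

Lemma iterates_converge x0 : P x0 -> exists L c, 0 <= c /\
  (forall i, (i < n)%nat -> Un_cv (fun s => Nat.iter s T x0 i) (L i)) /\
  (forall s i, (i < n)%nat -> Rabs (Nat.iter s T x0 i - L i) <= c * q ^ s).
Proof.
  intros Px0. set (x s := Nat.iter s T x0).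
  assert (Px : forall s, P (x s)) by (induction s; simpl; auto).
  set (D := N (fun i => x 1%nat i - x 0%nat i)).
  assert (Hstep : forall t, N (fun i => x (S t) i - x t i) <= D * q ^ t).
  { induction t as [|t IH]; [rewrite pow_O, Rmult_1_r; apply Rle_refl|].
    eapply Rle_trans; [apply (T_contraction (x (S t)) (x t)); auto|].
    simpl pow. rewrite <- Rmult_assoc, (Rmult_comm D q), Rmult_assoc.
    apply Rmult_le_compat_l; [apply q_range|exact IH]. }
  assert (Hcomp : forall i, (i < n)%nat -> exists l,
    Un_cv (fun s => x s i) l /\ forall s, Rabs (x s i - l) <= D / (1 - q) * q ^ s).
  { intros i Hi. apply geometric_cv; auto. intros t.
    eapply Rle_trans; [apply (proj1 N_bounds (fun i => x (S t) i - x t i)); auto|apply Hstep]. }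
  set (L i := epsilon (inhabits 0) (fun l =>
    Un_cv (fun s => x s i) l /\ forall s, Rabs (x s i - l) <= D / (1 - q) * q ^ s)).
  assert (HL : forall i, (i < n)%nat -> Un_cv (fun s => x s i) (L i) /\
            forall s, Rabs (x s i - L i) <= D / (1 - q) * q ^ s)
    by (intros i Hi; apply epsilon_spec, Hcomp, Hi).
  exists L, (D / (1 - q)). split; [|split; intros; apply HL; auto].
  apply Rmult_le_pos; [apply (norm_bounds_nonneg n); auto|].
  left; apply Rinv_0_lt_compat; lra.
Qed.

Lemma banach x0 : P x0 -> exists L, P L /\ (forall i, (i < n)%nat -> T L i = L i) /\
  exists c, 0 <= c /\ forall s i, (i < n)%nat -> Rabs (Nat.iter s T x0 i - L i) <= c * q ^ s.
Proof.
  intros Px0. destruct (iterates_converge x0 Px0) as [L [c [Hc [Hcv Hrate]]]].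
  set (x s := Nat.iter s T x0).
  assert (Px : forall s, P (x s)) by (induction s; simpl; auto).
  assert (PL : P L) by (apply (P_closed x); auto).
  exists L. split; [exact PL|]. split; [|exists c; auto].
  intros i Hi. apply Rminus_diag_uniq.
  assert (Hdist : forall s, N (fun j => L j - x s j) <= INR n * c * q ^ s).
  { intros s. eapply Rle_trans; [apply (proj2 N_bounds)|].
    rewrite Rmult_assoc, <- fsum_const. apply fsum_le. intros j Hj.
    rewrite <- Rabs_Ropp, Ropp_minus_distr. apply Hrate; auto. }
  assert (Hfix : Rabs (T L i - L i) <= 0).
  { apply (geometric_squeeze _ ((INR n + 1) * c) q q_range). intros s.
    assert (H1 : Rabs (T L i - T (x s) i) <= q * (INR n * c * q ^ s)).
    { eapply Rle_trans; [apply (proj1 N_bounds (fun j => T L j - T (x s) j)); auto|].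
      eapply Rle_trans; [apply T_contraction; auto|].
      apply Rmult_le_compat_l; [lra|apply Hdist]. }
    assert (H2 : Rabs (x (S s) i - L i) <= c * q ^ S s) by (apply Hrate; auto).
    change (x (S s)) with (T (x s)) in H2. simpl pow in H2.
    replace (T L i - L i) with ((T L i - T (x s) i) + (T (x s) i - L i)) by ring.
    eapply Rle_trans; [apply Rabs_triang|].
    assert (Hcq : 0 <= c * q ^ s) by (apply Rmult_le_pos; [lra|apply pow_le, q_range]).
    pose proof (pos_INR n). assert (0 <= INR n * (c * q ^ s)) by nra.
    assert (q * (INR n * (c * q ^ s)) <= INR n * (c * q ^ s)) by nra.
    assert (c * (q * q ^ s) <= c * q ^ s) by nra.
    nra. }
  apply Rabs_le_0, Hfix.
Qed.

End Banach.

Lemma l1_contraction_unique n (T : (nat -> R) -> nat -> R) q u v :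
  0 <= q < 1 ->
  (forall i, (i < n)%nat -> T u i = u i) -> (forall i, (i < n)%nat -> T v i = v i) ->
  l1norm n (fun i => T u i - T v i) <= q * l1norm n (fun i => u i - v i) ->
  forall i, (i < n)%nat -> u i = v i.
Proof.
  intros Hq Hu Hv Hc i Hi.
  assert (E : l1norm n (fun i => T u i - T v i) = l1norm n (fun i => u i - v i))
    by (apply fsum_ext; intros j Hj; rewrite Hu, Hv by auto; reflexivity).
  assert (H0 : 0 <= l1norm n (fun i => u i - v i))
    by (apply fsum_nonneg; intros; apply Rabs_pos).
  assert (Hi' := proj1 (l1norm_bounds n) (fun i => u i - v i) i Hi).
  apply Rminus_diag_uniq, Rabs_le_0. nra.
Qed.

(** * Linear systems u = b + B u with a nonnegative matrix B *)

Lemma affine_fixed_nonneg n N B b q :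
  (0 < n)%nat -> norm_bounds n N -> 0 <= q < 1 ->
  (forall i j, (i < n)%nat -> (j < n)%nat -> 0 <= B i j) ->
  (forall i, (i < n)%nat -> 0 <= b i) ->
  (forall w, N (matvec n B w) <= q * N w) ->
  exists z, (forall i, (i < n)%nat -> 0 <= z i) /\
            (forall i, (i < n)%nat -> z i = b i + matvec n B z i).
Proof.
  intros Hn HN Hq HB Hb Hcontr.
  set (T u i := b i + matvec n B u i).
  destruct (banach n N (fun z => forall i, (i < n)%nat -> 0 <= z i) T q Hn HN Hq)
    with (x0 := fun _ : nat => 0) as [z [Hz [Hfix _]]].
  - intros u Hu i Hi. unfold T, matvec.
    assert (0 <= fsum n (fun j => B i j * u j))
      by (apply fsum_nonneg; intros; apply Rmult_le_pos; auto).
    pose proof (Hb i Hi). lra.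
  - intros u v _ _. unfold T.
    replace (fun i => b i + matvec n B u i - (b i + matvec n B v i))
      with (fun i => matvec n B u i - matvec n B v i)
      by (apply functional_extensionality; intros; ring).
    rewrite matvec_minus. apply Hcontr.
  - intros u L Hu HL i Hi. apply (limit_nonneg (fun s => u s i)); auto.
  - intros; lra.
  - exists z. split; [exact Hz|]. intros i Hi. symmetry. apply Hfix, Hi.
Qed.

Lemma duality n B b c z g :
  (forall i, (i < n)%nat -> z i = b i + matvec n B z i) ->
  (forall k, (k < n)%nat -> g k = c k + matvec n (fun k j => B j k) g k) ->
  fsum n (fun k => c k * z k) = fsum n (fun j => g j * b j).
Proof.
  intros Hz Hg.
  assert (E1 : fsum n (fun k => c k * z k) =
               fsum n (fun k => g k * z k) - fsum n (fun k => fsum n (fun j => B j k * g j * z k))).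
  { rewrite <- fsum_minus. apply fsum_ext. intros k Hk. rewrite (Hg k Hk).
    unfold matvec. rewrite Rmult_plus_distr_r, (Rmult_comm (fsum _ _) (z k)), <- fsum_scal.
    replace (fsum n (fun j => z k * (B j k * g j))) with (fsum n (fun j => B j k * g j * z k))
      by (apply fsum_ext; intros; ring). ring. }
  assert (E2 : fsum n (fun j => g j * b j) =
               fsum n (fun j => g j * z j) - fsum n (fun j => fsum n (fun k => B j k * g j * z k))).
  { rewrite <- fsum_minus. apply fsum_ext. intros j Hj. rewrite (Hz j Hj).
    unfold matvec. rewrite Rmult_plus_distr_l, <- fsum_scal.
    replace (fsum n (fun k => g j * (B j k * z k))) with (fsum n (fun k => B j k * g j * z k))
      by (apply fsum_ext; intros; ring). ring. }
  rewrite E1, E2, fsum_swap. reflexivity.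
Qed.

(** * The model *)

Section Model.

Variables (n : nat) (C : nat -> nat -> R) (th : nat -> R).
Hypothesis n_pos : (0 < n)%nat.
Hypothesis C_nonneg : forall i j, (i < n)%nat -> (j < n)%nat -> 0 <= C i j.
Hypothesis C_rows : forall i, (i < n)%nat -> fsum n (fun j => C i j) = 1.
Hypothesis th_range : forall i, (i < n)%nat -> 0 <= th i < 1.

(* Opinion vectors with entries in [0,1], which make W(x) row-stochastic. *)
Definition prob (x : nat -> R) : Prop := forall i, (i < n)%nat -> 0 <= x i <= 1.

Lemma simplex_prob x : in_simplex n x -> prob x.
Proof.
  intros [H0 H1] i Hi. split; [auto|]. rewrite <- H1. apply fsum_term_le; auto.
Qed.

Lemma theta_max_lt1 : theta_max n th < 1.
Proof. apply fmax_lt; auto. intros; apply th_range; auto. Qed.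

Lemma theta_max_nonneg : 0 <= theta_max n th.
Proof. eapply Rle_trans; [apply (th_range 0%nat n_pos)|apply fmax_ge, n_pos]. Qed.

Lemma W_nonneg x k j : prob x -> (k < n)%nat -> (j < n)%nat -> 0 <= Wmat C x k j.
Proof.
  intros Hx Hk Hj. unfold Wmat. pose proof (C_nonneg k j Hk Hj). pose proof (Hx k Hk).
  destruct (Nat.eqb k j); nra.
Qed.

Lemma W_rows x k : (k < n)%nat -> fsum n (fun j => Wmat C x k j) = 1.
Proof.
  intros Hk. unfold Wmat. rewrite fsum_plus, fsum_scal, C_rows, fsum_delta by auto. ring.
Qed.

(* A(x) = W(x)^T Theta; its j-th column sums to theta_j. *)
Definition Amat (x : nat -> R) (i j : nat) : R := Wmat C x j i * th j.

Lemma A_nonneg x i j : prob x -> (i < n)%nat -> (j < n)%nat -> 0 <= Amat x i j.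
Proof. intros. apply Rmult_le_pos; [apply W_nonneg|apply th_range]; auto. Qed.

Lemma A_cols x j : (j < n)%nat -> fsum n (fun i => Amat x i j) = th j.
Proof.
  intros Hj. unfold Amat. rewrite (fsum_ext _ _ (fun i => th j * Wmat C x j i))
    by (intros; ring). rewrite fsum_scal, W_rows by auto. ring.
Qed.

Lemma A_l1_contraction x w :
  prob x -> l1norm n (matvec n (Amat x) w) <= theta_max n th * l1norm n w.
Proof.
  intros Hx. eapply Rle_trans; [apply l1norm_matvec|].
  unfold l1norm. rewrite <- fsum_scal. apply fsum_le. intros j Hj.
  rewrite (fsum_ext _ _ (fun i => Amat x i j))
    by (intros; apply Rabs_right, Rle_ge, A_nonneg; auto).
  rewrite A_cols by auto. apply Rmult_le_compat_r; [apply Rabs_pos|apply fmax_ge; auto].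
Qed.

Lemma At_row_sum x k : prob x -> (k < n)%nat ->
  fsum n (fun j => Rabs (Amat x j k)) = th k.
Proof.
  intros Hx Hk. rewrite (fsum_ext _ _ (fun j => th k * Wmat C x k j)).
  - rewrite fsum_scal, W_rows by auto. ring.
  - intros j Hj. rewrite Rabs_right by (apply Rle_ge, A_nonneg; auto). unfold Amat. ring.
Qed.

Lemma At_sup_contraction x w : prob x ->
  supnorm n (matvec n (fun k j => Amat x j k) w) <= theta_max n th * supnorm n w.
Proof.
  intros Hx. apply fmax_le; auto. intros k Hk.
  eapply Rle_trans; [apply abs_matvec_le|]. cbv beta. rewrite At_row_sum by auto.
  apply Rmult_le_compat_r; [apply (norm_bounds_nonneg n); auto; apply supnorm_bounds; auto|].
  apply fmax_ge; auto.
Qed.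

Definition zvec (x : nat -> R) : nat -> R := solve n (Mmat C th x) (fun _ => 1 / INR n).

Lemma Fmap_zvec x i : Fmap n C th x i = (1 - th i) * zvec x i.
Proof. reflexivity. Qed.

Lemma Mmat_matvec x z i : (i < n)%nat ->
  fsum n (fun j => Mmat C th x i j * z j) = z i - matvec n (Amat x) z i.
Proof.
  intros Hi. unfold Mmat, matvec, Amat.
  rewrite (fsum_ext _ _ (fun j => (if Nat.eqb i j then z j else 0) - Wmat C x j i * th j * z j))
    by (intros j Hj; destruct (Nat.eqb i j); ring).
  rewrite fsum_minus, fsum_delta; auto.
Qed.

Lemma zvec_spec x : prob x ->
  (forall i, (i < n)%nat -> 0 <= zvec x i) /\
  (forall i, (i < n)%nat -> zvec x i = 1 / INR n + matvec n (Amat x) (zvec x) i).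
Proof.
  intros Hx.
  assert (Hb : forall i, (i < n)%nat -> 0 <= 1 / INR n)
    by (intros; unfold Rdiv; rewrite Rmult_1_l; left; apply Rinv_0_lt_compat, lt_0_INR; auto).
  destruct (affine_fixed_nonneg n (l1norm n) (Amat x) (fun _ => 1 / INR n) (theta_max n th)
    n_pos (l1norm_bounds n) (conj theta_max_nonneg theta_max_lt1)
    (fun i j => A_nonneg x i j Hx) Hb (fun w => A_l1_contraction x w Hx)) as [z [Hz0 Hz]].
  assert (Hsolve : forall i, (i < n)%nat -> zvec x i = 1 / INR n + matvec n (Amat x) (zvec x) i).
  { assert (Hs : forall i, (i < n)%nat ->
              fsum n (fun j => Mmat C th x i j * zvec x j) = 1 / INR n).
    { apply (epsilon_spec (inhabits (fun _ : nat => 0))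
        (fun z => forall i, (i < n)%nat -> fsum n (fun j => Mmat C th x i j * z j) = 1 / INR n)).
      exists z. intros i Hi. rewrite Mmat_matvec, (Hz i Hi) at 1 by auto. ring. }
    intros i Hi. specialize (Hs i Hi). rewrite Mmat_matvec in Hs by auto. lra. }
  set (T u i := 1 / INR n + matvec n (Amat x) u i).
  assert (Heq : forall i, (i < n)%nat -> zvec x i = z i).
  { apply (l1_contraction_unique n T (theta_max n th)).
    - exact (conj theta_max_nonneg theta_max_lt1).
    - intros i Hi. symmetry. apply Hsolve, Hi.
    - intros i Hi. symmetry. apply Hz, Hi.
    - unfold T. replace (fun i => 1 / INR n + matvec n (Amat x) (zvec x) i -
                                 (1 / INR n + matvec n (Amat x) z i))
        with (fun i => matvec n (Amat x) (zvec x) i - matvec n (Amat x) z i)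
        by (apply functional_extensionality; intros; ring).
      rewrite matvec_minus. apply A_l1_contraction, Hx. }
  split; [intros i Hi; rewrite Heq; auto|exact Hsolve].
Qed.

Lemma F_simplex x : in_simplex n x -> in_simplex n (Fmap n C th x).
Proof.
  intros Hx. destruct (zvec_spec x (simplex_prob x Hx)) as [Hz0 Hz]. split.
  - intros i Hi. rewrite Fmap_zvec. pose proof (th_range i Hi).
    apply Rmult_le_pos; [lra|auto].
  - assert (Hsum : fsum n (zvec x) = 1 + fsum n (fun j => th j * zvec x j)).
    { rewrite (fsum_ext _ _ (fun i => 1 / INR n + matvec n (Amat x) (zvec x) i)) by auto.
      rewrite fsum_plus, fsum_const, fsum_matvec.
      rewrite (fsum_ext _ _ (fun j => th j * zvec x j)) by (intros; rewrite A_cols; auto).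
      field. apply not_0_INR. lia. }
    rewrite (fsum_ext _ _ (fun i => zvec x i - th i * zvec x i))
      by (intros; rewrite Fmap_zvec; ring).
    rewrite fsum_minus, Hsum. ring.
Qed.

Lemma At_matvec_le x g k : prob x -> (k < n)%nat -> (forall j, (j < n)%nat -> 0 <= g j) ->
  matvec n (fun k j => Amat x j k) g k <= th k * fmax n g.
Proof.
  intros Hx Hk Hg. eapply Rle_trans; [apply Rle_abs|].
  eapply Rle_trans; [apply abs_matvec_le|]. cbv beta. rewrite At_row_sum by auto.
  apply Rmult_le_compat_l; [apply th_range; auto|].
  apply fmax_le; auto. intros j Hj. rewrite Rabs_right by (apply Rle_ge; auto). apply fmax_ge; auto.
Qed.

(* Maximum principle for g = e_i + A(x)^T g, g >= 0: the maximum of g sits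
   at i, so g_k <= theta_k g_i off i, and (1 - theta_i) g_i <= 1. *)
Lemma dual_vector_bound x i g : prob x -> (i < n)%nat ->
  (forall k, (k < n)%nat -> 0 <= g k) ->
  (forall k, (k < n)%nat ->
     g k = (if Nat.eqb i k then 1 else 0) + matvec n (fun k j => Amat x j k) g k) ->
  (1 - th i) * g i <= 1 /\ (forall k, (k < n)%nat -> k <> i -> g k <= th k * g i).
Proof.
  intros Hx Hi Hg0 Hg.
  assert (Hoff : forall k, (k < n)%nat -> k <> i -> g k <= th k * fmax n g).
  { intros k Hk Hki. rewrite (Hg k Hk).
    replace (if Nat.eqb i k then 1 else 0) with 0
      by (destruct (Nat.eqb_spec i k); [lia|reflexivity]).
    pose proof (At_matvec_le x g k Hx Hk Hg0). lra. }
  assert (Hmax : fmax n g <= g i).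
  { destruct (Rle_lt_dec (fmax n g) (g i)) as [|Hlt]; [assumption|].
    assert (Hm : fmax n g <= Rmax (g i) (theta_max n th * fmax n g)).
    { apply fmax_le; auto. intros k Hk. destruct (Nat.eq_dec k i) as [->|Hki]; [apply Rmax_l|].
      eapply Rle_trans; [apply Hoff; auto|eapply Rle_trans; [|apply Rmax_r]].
      apply Rmult_le_compat_r; [pose proof (Hg0 i Hi); lra|apply fmax_ge; auto]. }
    pose proof theta_max_lt1. pose proof (Hg0 i Hi).
    unfold Rmax in Hm. destruct (Rle_dec (g i) (theta_max n th * fmax n g)); nra. }
  split.
  - pose proof (Hg i Hi) as Hgi. rewrite Nat.eqb_refl in Hgi.
    pose proof (At_matvec_le x g i Hx Hi Hg0). pose proof (th_range i Hi). nra.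
  - intros k Hk Hki. eapply Rle_trans; [apply Hoff; auto|].
    apply Rmult_le_compat_l; [apply th_range|]; auto.
Qed.

(* The key estimate n (1 - theta_i) z_i <= 1 + sum theta - theta_i,
   obtained through the dual vector g: n z_i = sum g. *)
Lemma zvec_bound x i : prob x -> (i < n)%nat ->
  INR n * (1 - th i) * zvec x i <= 1 + fsum n th - th i.
Proof.
  intros Hx Hi. destruct (zvec_spec x Hx) as [_ Hz].
  assert (He : forall k, (k < n)%nat -> 0 <= (if Nat.eqb i k then 1 else 0))
    by (intros k _; destruct (Nat.eqb i k); lra).
  destruct (affine_fixed_nonneg n (supnorm n) (fun k j => Amat x j k)
    (fun k => if Nat.eqb i k then 1 else 0) (theta_max n th) n_pos (supnorm_bounds n n_pos)
    (conj theta_max_nonneg theta_max_lt1) (fun k j Hk Hj => A_nonneg x j k Hx Hj Hk)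
    He (fun w => At_sup_contraction x w Hx))
    as [g [Hg0 Hg]].
  destruct (dual_vector_bound x i g Hx Hi Hg0 Hg) as [Hgi Hoff].
  assert (Hdual : INR n * zvec x i = fsum n g).
  { pose proof (duality n (Amat x) (fun _ => 1 / INR n) _ (zvec x) g Hz Hg) as E.
    rewrite (fsum_ext _ _ (fun k => if Nat.eqb i k then zvec x k else 0)) in E
      by (intros k _; destruct (Nat.eqb i k); ring).
    rewrite fsum_delta, (fsum_ext _ _ (fun j => 1 / INR n * g j)), fsum_scal in E
      by (auto || (intros; ring)).
    rewrite E. field. apply not_0_INR. lia. }
  assert (Hsum : fsum n g <= g i * fsum n th + (1 - th i) * g i).
  { rewrite <- fsum_scal, <- (fsum_delta n i (fun _ => (1 - th i) * g i)), <- fsum_plus by auto.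
    apply fsum_le. intros k Hk. destruct (Nat.eqb_spec i k) as [->|Hki]; [lra|].
    pose proof (Hoff k Hk ltac:(auto)). lra. }
  assert (th i <= fsum n th) by (apply fsum_term_le; auto; intros; apply th_range; auto).
  pose proof (th_range i Hi). pose proof (Hg0 i Hi).
  replace (INR n * (1 - th i) * zvec x i) with ((1 - th i) * fsum n g) by (rewrite <- Hdual; ring).
  assert ((1 - th i) * fsum n g <= (1 - th i) * (g i * fsum n th + (1 - th i) * g i))
    by (apply Rmult_le_compat_l; lra).
  nra.
Qed.

Lemma W_diff_row x y j : (j < n)%nat ->
  fsum n (fun i => Rabs (Wmat C x j i - Wmat C y j i)) <= 2 * Rabs (x j - y j).
Proof.
  intros Hj.
  eapply Rle_trans with
    (fsum n (fun i => Rabs (x j - y j) * ((if Nat.eqb j i then 1 else 0) + C j i))).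
  - apply fsum_le. intros i Hi. unfold Wmat.
    replace ((if Nat.eqb j i then x j else 0) + (1 - x j) * C j i -
             ((if Nat.eqb j i then y j else 0) + (1 - y j) * C j i))
      with ((x j - y j) * ((if Nat.eqb j i then 1 else 0) - C j i))
      by (destruct (Nat.eqb j i); ring).
    rewrite Rabs_mult. apply Rmult_le_compat_l; [apply Rabs_pos|].
    pose proof (C_nonneg j i Hj Hi).
    destruct (Nat.eqb j i); apply Rabs_le; lra.
  - rewrite fsum_scal, fsum_plus, C_rows, (fsum_delta n j (fun _ => 1)) by auto. lra.
Qed.

Lemma A_diff_l1 x y z : (forall j, (j < n)%nat -> 0 <= z j) ->
  l1norm n (matvec n (fun i j => Amat x i j - Amat y i j) z) <=
  fsum n (fun j => 2 * th j * z j * Rabs (x j - y j)).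
Proof.
  intros Hz. eapply Rle_trans; [apply l1norm_matvec|]. apply fsum_le. intros j Hj.
  rewrite Rabs_right by (apply Rle_ge, Hz, Hj).
  rewrite (fsum_ext _ _ (fun i => th j * Rabs (Wmat C x j i - Wmat C y j i))).
  - rewrite fsum_scal. pose proof (W_diff_row x y j Hj). pose proof (th_range j Hj).
    pose proof (Hz j Hj). assert (0 <= th j * z j) by nra. nra.
  - intros i Hi. unfold Amat.
    rewrite <- Rmult_minus_distr_r, Rabs_mult, (Rabs_right (th j))
      by (apply Rle_ge, th_range, Hj). ring.
Qed.

(* Lipschitz estimate for F on the simplex: writing d = z(x) - z(y), one has
   d = A(x) d + (A(x) - A(y)) z(y), and the columns of A(x) absorb the
   theta-part of |d|, leaving exactly the l1-norm of F(x) - F(y). *)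
Lemma F_l1_diff x y : in_simplex n x -> in_simplex n y ->
  l1norm n (fun i => Fmap n C th x i - Fmap n C th y i) <=
  fsum n (fun j => 2 * th j * zvec y j * Rabs (x j - y j)).
Proof.
  intros Hx Hy.
  destruct (zvec_spec x (simplex_prob x Hx)) as [_ Hzx].
  destruct (zvec_spec y (simplex_prob y Hy)) as [Hzy0 Hzy].
  set (d i := zvec x i - zvec y i).
  set (v := matvec n (fun i j => Amat x i j - Amat y i j) (zvec y)).
  assert (Hd : forall i, (i < n)%nat -> d i = matvec n (Amat x) d i + v i).
  { intros i Hi. unfold d, v, matvec. rewrite (Hzx i Hi), (Hzy i Hi) at 1.
    unfold matvec. rewrite <- fsum_plus.
    rewrite (fsum_ext n (fun j => Amat x i j * (zvec x j - zvec y j) +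
                                  (Amat x i j - Amat y i j) * zvec y j)
                       (fun j => Amat x i j * zvec x j - Amat y i j * zvec y j))
      by (intros; ring).
    rewrite fsum_minus. ring. }
  assert (HF : l1norm n (fun i => Fmap n C th x i - Fmap n C th y i) =
               l1norm n d - fsum n (fun j => th j * Rabs (d j))).
  { unfold l1norm. rewrite <- fsum_minus. apply fsum_ext. intros i Hi.
    rewrite !Fmap_zvec, <- Rmult_minus_distr_l, Rabs_mult, Rabs_right
      by (pose proof (th_range i Hi); lra). unfold d. ring. }
  assert (Hs : l1norm n d <= fsum n (fun j => th j * Rabs (d j)) + l1norm n v).
  { eapply Rle_trans with (l1norm n (matvec n (Amat x) d) + l1norm n v).
    - unfold l1norm. rewrite <- fsum_plus. apply fsum_le. intros i Hi.
      rewrite (Hd i Hi). apply Rabs_triang.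
    - apply Rplus_le_compat_r. eapply Rle_trans; [apply l1norm_matvec|].
      apply Req_le, fsum_ext. intros j Hj. f_equal.
      rewrite <- (A_cols x j Hj). apply fsum_ext. intros i Hi.
      apply Rabs_right, Rle_ge, A_nonneg; auto. apply simplex_prob, Hx. }
  rewrite HF. pose proof (A_diff_l1 x y (zvec y) Hzy0). fold v in H. lra.
Qed.

Lemma F_contraction x y q : in_simplex n x -> in_simplex n y ->
  (forall j, (j < n)%nat -> 2 * th j * zvec y j <= q) ->
  l1norm n (fun i => Fmap n C th x i - Fmap n C th y i) <= q * l1norm n (fun i => x i - y i).
Proof.
  intros Hx Hy Hq. eapply Rle_trans; [apply F_l1_diff; auto|].
  unfold l1norm. rewrite <- fsum_scal. apply fsum_le. intros j Hj.
  apply Rmult_le_compat_r; [apply Rabs_pos|apply Hq, Hj].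
Qed.

Lemma theta_spread_nonneg : 0 <= fsum n th - theta_min n th.
Proof.
  pose proof (fmin_le n th 0%nat n_pos).
  assert (th 0%nat <= fsum n th) by (apply fsum_term_le; auto; intros; apply th_range; auto).
  unfold theta_min. lra.
Qed.

Lemma theta_z_le x j : prob x -> (j < n)%nat ->
  2 * th j * zvec x j <=
  2 * theta_max n th * (1 + (fsum n th - theta_min n th)) / (INR n * (1 - theta_max n th)).
Proof.
  intros Hx Hj.
  pose proof (zvec_bound x j Hx Hj) as Hb.
  pose proof (fmin_le n th j Hj). pose proof (th_range j Hj).
  assert (Htj : th j <= theta_max n th) by (apply fmax_ge, Hj).
  pose proof (proj1 (zvec_spec x Hx) j Hj). pose proof theta_max_lt1.
  assert (Hnpos : 0 < INR n) by (apply lt_0_INR, n_pos).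
  set (tm := theta_max n th) in *. set (zeta := fsum n th - theta_min n th).
  assert (Hz : INR n * (1 - th j) * zvec x j <= 1 + zeta) by (unfold zeta, theta_min; lra).
  apply (Rmult_le_reg_r (INR n * (1 - tm))); [apply Rmult_lt_0_compat; lra|].
  replace (2 * tm * (1 + zeta) / (INR n * (1 - tm)) * (INR n * (1 - tm)))
    with (2 * tm * (1 + zeta)) by (field; lra).
  assert (Hnz : 0 <= INR n * zvec x j) by nra.
  assert (th j * (1 - tm) <= tm * (1 - th j)) by nra.
  assert (th j * (1 - tm) * (INR n * zvec x j) <= tm * (1 - th j) * (INR n * zvec x j))
    by (apply Rmult_le_compat_r; auto).
  assert (tm * (INR n * (1 - th j) * zvec x j) <= tm * (1 + zeta))
    by (apply Rmult_le_compat_l; [apply theta_max_nonneg|auto]).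
  nra.
Qed.

End Model.

Lemma simplex_closed n (u : nat -> nat -> R) L : (forall s, in_simplex n (u s)) ->
  (forall i, (i < n)%nat -> Un_cv (fun s => u s i) (L i)) -> in_simplex n L.
Proof.
  intros Hu HL. split.
  - intros i Hi. apply (limit_nonneg (fun s => u s i)); [|auto]. intros s. apply (Hu s), Hi.
  - apply (UL_sequence (fun s => fsum n (u s))); [apply fsum_cv, HL|].
    intros e He. exists O. intros s _. rewrite (proj2 (Hu s)).
    unfold R_dist. rewrite Rminus_diag, Rabs_R0. exact He.
Qed.

Lemma uniform_in_simplex n : (0 < n)%nat -> in_simplex n (fun _ => 1 / INR n).
Proof.
  intros Hn. assert (0 < INR n) by (apply lt_0_INR, Hn). split.
  - intros. apply Rlt_le, Rdiv_lt_0_compat; lra.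
  - rewrite fsum_const. field. lra.
Qed.

Lemma contraction_factor_lt1 (nr tm zeta : R) :
  0 < nr -> 0 <= tm < 1 -> 0 <= zeta -> tm < nr / (nr + 2 * (1 + zeta)) ->
  0 <= 2 * tm * (1 + zeta) / (nr * (1 - tm)) < 1.
Proof.
  intros Hn Htm Hz Hmax.
  assert (Hden : 0 < nr * (1 - tm)) by (apply Rmult_lt_0_compat; lra).
  apply (Rmult_lt_compat_r (nr + 2 * (1 + zeta))) in Hmax; [|lra].
  replace (nr / (nr + 2 * (1 + zeta)) * (nr + 2 * (1 + zeta))) with nr in Hmax by (field; lra).
  split.
  - apply Rmult_le_pos; [nra|left; apply Rinv_0_lt_compat, Hden].
  - apply (Rmult_lt_reg_r (nr * (1 - tm))); [exact Hden|].
    replace (2 * tm * (1 + zeta) / (nr * (1 - tm)) * (nr * (1 - tm))) with (2 * tm * (1 + zeta))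
      by (field; lra). lra.
Qed.

Lemma traj_iter n C th x0 s : traj n C th x0 s = Nat.iter s (Fmap n C th) x0.
Proof. induction s as [|s IH]; simpl; [reflexivity|]. rewrite IH. reflexivity. Qed.

Theorem theorem4 (n : nat) (C : nat -> nat -> R) (theta : nat -> R) :
  (2 <= n)%nat ->
  (forall i j, (i < n)%nat -> (j < n)%nat -> 0 <= C i j) ->
  (forall i, (i < n)%nat -> fsum n (fun j => C i j) = 1) ->
  (forall i, (i < n)%nat -> C i i = 0) ->
  (forall i, (i < n)%nat -> 0 <= theta i <= 1) ->
  (forall i, (i < n)%nat -> theta i < 1) ->
  (exists j, (j < n)%nat /\ 0 < theta j) ->
  let zeta := INR n * theta_ave n theta - theta_min n theta in
  theta_max n theta < INR n / (INR n + 2 * (1 + zeta)) ->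
  exists xstar : nat -> R,
    in_simplex n xstar /\ is_fixed n C theta xstar /\
    (forall y, in_simplex n y -> is_fixed n C theta y ->
       forall i, (i < n)%nat -> y i = xstar i) /\
    (forall x0, in_simplex n x0 ->
       exists c rho, 0 <= c /\ 0 <= rho < 1 /\
         forall s i, (i < n)%nat ->
           Rabs (traj n C theta x0 s i - xstar i) <= c * rho ^ s).
Proof.
  intros H2n HC0 HC1 _ HT0 HT1 _ zeta Hmax.
  assert (Hn : (0 < n)%nat) by lia.
  assert (HT : forall i, (i < n)%nat -> 0 <= theta i < 1)
    by (intros i Hi; split; [apply HT0|apply HT1]; auto).
  assert (Hzeta : zeta = fsum n theta - theta_min n theta)
    by (unfold zeta, theta_ave; field; apply not_0_INR; lia).
  set (q := 2 * theta_max n theta * (1 + zeta) / (INR n * (1 - theta_max n theta))).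
  assert (Hq : 0 <= q < 1).
  { apply contraction_factor_lt1; [apply lt_0_INR, Hn| |rewrite Hzeta|exact Hmax].
    - exact (conj (theta_max_nonneg n theta Hn HT) (theta_max_lt1 n theta Hn HT)).
    - apply theta_spread_nonneg; auto. }
  assert (Hcontr : forall u v, in_simplex n u -> in_simplex n v ->
    l1norm n (fun i => Fmap n C theta u i - Fmap n C theta v i) <=
    q * l1norm n (fun i => u i - v i)).
  { intros u v Hu Hv. apply F_contraction; auto. intros j Hj. unfold q. rewrite Hzeta.
    apply theta_z_le; auto. apply simplex_prob, Hv. }
  pose proof (fun x0 => banach n (l1norm n) (in_simplex n) (Fmap n C theta) q Hn
    (l1norm_bounds n) Hq (F_simplex n C theta Hn HC0 HC1 HT) Hcontr (simplex_closed n) x0) as HB.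
  destruct (HB _ (uniform_in_simplex n Hn)) as [xstar [Hstar [Hfix _]]].
  assert (Huniq : forall y, in_simplex n y -> is_fixed n C theta y ->
                  forall i, (i < n)%nat -> y i = xstar i)
    by (intros y Hy Hfy; apply (l1_contraction_unique n (Fmap n C theta) q); auto).
  exists xstar. split; [exact Hstar|]. split; [exact Hfix|]. split; [exact Huniq|].
  intros x0 Hx0. destruct (HB x0 Hx0) as [L [HL [HLfix [c [Hc Hrate]]]]].
  exists c, q. split; [exact Hc|]. split; [exact Hq|]. intros s i Hi.
  rewrite traj_iter, <- (Huniq L HL HLfix i Hi). apply Hrate, Hi.
Qed.
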